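(* For every integer $k\ge 2$, the smallest $k$-admissible number is $2^{\binom{k}{2}+\nu_2(k)}$.
   Context: $\nu_2(x)$ denotes the 2-adic valuation of a positive integer $x$. For an integer $k\ge 1$, an integer $n$ is called $k$-admissible if $n>k$ and $\binom{n}{k}$ is divisible by $2^{\binom{k}{2}}$. *)

From mathcomp Require Import all_boot.

Definition nu2 (x : nat) : nat := logn 2 x.

Definition admissible (k n : nat) : bool :=
  (k < n) && (2 ^ 'C(k, 2) %| 'C(n, k)).

(* By Legendre's formula, the 2-adic valuation of 'C(n, k) counts the carries
   in the base-2 addition k + (n - k).  A carry at position i needs
   2^i <= n, and none occurs at positions i <= nu2 k, where k has only zero
   digits; hence nu2 'C(n, k) + nu2 k <= log2 n, i.e. every k-admissible n is
   at least 2^('C(k,2) + nu2 k).  For n = 2^e the identity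
   k 'C(n, k) = n 'C(n - 1, k - 1) gives equality, and 2^('C(k,2) + nu2 k)
   exceeds k, so this power of 2 is itself admissible. *)

From mathcomp Require Import all_boot zify.

Section BinomialValuation.

Variable p : nat.
Hypothesis p_pr : prime p.

Let p_gt1 : 1 < p := prime_gt1 p_pr.

Lemma logn_fact_widen {m N} : m <= N ->
  logn p m`! = \sum_(1 <= i < N.+1) m %/ p ^ i.
Proof.
move=> le_m_N; rewrite logn_fact // [RHS](big_cat_nat _ (n := m.+1)) //=.
rewrite [X in _ = _ + X]big_nat_cond [X in _ = _ + X]big1 ?addn0 //.
move=> i /andP[/andP[lt_m_i _] _].
by rewrite divn_small // (leq_trans (ltn_expl m p_gt1)) // leq_pexp2l // ltnW.
Qed.

Definition carry n k i : bool := p ^ i <= k %% p ^ i + (n - k) %% p ^ i.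

Lemma logn_bin_carries n k : k <= n ->
  logn p 'C(n, k) = \sum_(1 <= i < n.+1) carry n k i.
Proof.
move=> le_k_n.
have := congr1 (logn p) (bin_fact le_k_n).
rewrite !lognM ?muln_gt0 ?fact_gt0 ?bin_gt0 //.
rewrite (logn_fact_widen (leqnn n)) (logn_fact_widen le_k_n).
rewrite (logn_fact_widen (leq_subr k n)).
have -> : \sum_(1 <= i < n.+1) n %/ p ^ i =
    \sum_(1 <= i < n.+1) k %/ p ^ i + \sum_(1 <= i < n.+1) (n - k) %/ p ^ i
    + \sum_(1 <= i < n.+1) carry n k i.
  rewrite -!big_split /=; apply: eq_bigr => i _.
  by rewrite -divnD ?expn_gt0 ?prime_gt0 // subnKC.
lia.
Qed.

Lemma carry_dvd n k i : p ^ i %| k -> carry n k i = false.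
Proof.
move=> /eqP k_mod0; apply: negbTE; rewrite -ltnNge k_mod0 add0n.
by rewrite ltn_pmod // expn_gt0 prime_gt0.
Qed.

Lemma carry_large {n k i} : k <= n -> n < p ^ i -> carry n k i = false.
Proof.
move=> le_k_n lt_n_pi; apply: negbTE; rewrite -ltnNge.
apply: leq_ltn_trans lt_n_pi.
by rewrite -[leqRHS](subnKC le_k_n) leq_add // leq_mod.
Qed.

Lemma logn_bin_add_logn k n : 0 < k <= n ->
  logn p 'C(n, k) + logn p k <= trunc_log p n.
Proof.
case/andP=> k_gt0 le_k_n.
set v := logn p k; set t := trunc_log p n.
have le_v_t : v <= t.
  apply: trunc_log_max => //; apply: leq_trans le_k_n.
  exact: dvdn_leq (pfactor_dvdnn p k).
have le_t_n : t <= n.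
  apply: ltnW (leq_trans (ltn_expl t p_gt1) _).
  by apply: trunc_logP => //; apply: leq_trans le_k_n.
have le_v_n : v <= n := leq_trans le_v_t le_t_n.
rewrite logn_bin_carries // (big_cat_nat _ (n := v.+1)) ?ltnS //.
rewrite big1_seq; last first.
  move=> i /andP[_]; rewrite mem_index_iota => /andP[_ le_i_v].
  have dvd_pi_k : p ^ i %| k.
    by apply: dvdn_trans (pfactor_dvdnn p k); rewrite dvdn_exp2l.
  by apply/eqP; rewrite eqb0 carry_dvd.
rewrite (big_cat_nat _ (n := t.+1)) ?ltnS //.
rewrite [\sum_(t.+1 <= i < n.+1) _]big1_seq; last first.
  move=> i /andP[_]; rewrite mem_index_iota => /andP[lt_t_i _].
  have lt_n_pi : n < p ^ i.
    exact: leq_trans (trunc_log_ltn n p_gt1) (leq_pexp2l (ltnW p_gt1) lt_t_i).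
  by apply/eqP; rewrite eqb0 (carry_large le_k_n lt_n_pi).
have : \sum_(v.+1 <= i < t.+1) carry n k i <= \sum_(v.+1 <= i < t.+1) 1.
  by apply: leq_sum => i _; apply: leq_b1.
rewrite sum_nat_const_nat /=; lia.
Qed.

Lemma expn_logn_bin_add_logn_leq k n : 0 < k <= n ->
  p ^ (logn p 'C(n, k) + logn p k) <= n.
Proof.
move=> kn; have n_gt0 : 0 < n by case/andP: kn; apply: leq_trans.
apply: leq_trans _ (trunc_logP p_gt1 n_gt0).
by rewrite leq_exp2l // logn_bin_add_logn.
Qed.

(* k 'C(p^e, k) = p^e 'C(p^e - 1, k - 1) gives ">=", the previous bound "<=". *)
Lemma logn_bin_pfactor e k : 0 < k <= p ^ e ->
  logn p 'C(p ^ e, k) + logn p k = e.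
Proof.
move=> kpe; have /andP[k_gt0 le_k_pe] := kpe.
apply/anti_leq/andP; split.
  by rewrite -{2}(trunc_expnK e p_gt1); apply: logn_bin_add_logn.
have pe_gt0 : 0 < p ^ e by rewrite expn_gt0 prime_gt0.
have le_pred : k.-1 <= (p ^ e).-1 by lia.
have := congr1 (logn p) (mul_bin_diag (p ^ e) k.-1).
rewrite prednK // !lognM ?bin_gt0 // (pfactorK e p_pr) => eq_logn.
by rewrite addnC -eq_logn leq_addr.
Qed.

End BinomialValuation.

Lemma leq_bin2_logn2 k : 1 < k -> k <= 'C(k, 2) + logn 2 k.
Proof.
case: k => [|[|[|j]]] // _; apply: leq_trans (leq_addr _ _).
rewrite binS bin1; have : 0 < 'C(j.+2, 2) by rewrite bin_gt0.
lia.
Qed.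

Theorem mainTheorem2 (k : nat) (hk : 2 <= k) :
  admissible k (2 ^ ('C(k, 2) + nu2 k)) /\
  (forall n : nat, admissible k n -> 2 ^ ('C(k, 2) + nu2 k) <= n).
Proof.
rewrite /admissible /nu2; set e := 'C(k, 2) + logn 2 k.
have k_gt0 : 0 < k := ltnW hk.
have pr2 : prime 2 by [].
have lt_k_2e : k < 2 ^ e :=
  leq_trans (ltn_expl k (isT : 1 < 2)) (leq_pexp2l (isT : 0 < 2) (leq_bin2_logn2 k hk)).
split.
  have kpe : 0 < k <= 2 ^ e by rewrite k_gt0 (ltnW lt_k_2e).
  have C_gt0 : 0 < 'C(2 ^ e, k) by rewrite bin_gt0 (ltnW lt_k_2e).
  rewrite lt_k_2e (@pfactor_dvdn 2 _ _ pr2 C_gt0).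
  have := logn_bin_pfactor 2 pr2 e k kpe; lia.
move=> n /andP[lt_k_n].
have kn : 0 < k <= n by rewrite k_gt0 (ltnW lt_k_n).
have C_gt0 : 0 < 'C(n, k) by rewrite bin_gt0 (ltnW lt_k_n).
rewrite (@pfactor_dvdn 2 _ _ pr2 C_gt0) => le_C_logn.
apply: leq_trans (expn_logn_bin_add_logn_leq 2 pr2 k n kn).
by rewrite leq_exp2l // leq_add2r.
Qed.
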